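(* Let $C=\{\beta=(\beta_1,\beta_2)\in[0,1]^2:\beta_1\le\beta_2\}$ and let $A\subseteq C$ satisfy: (i) $A$ is closed; (ii) $\{(b,b): b\in[0,1]\}\subseteq A$; (iii) for all $\beta\in A$ and all $\gamma\in C$, if $\beta_1\le\gamma_1\le\gamma_2\le\beta_2$ then $\gamma\in A$. Then there exists a function $\Delta:[0,1]\to[0,1]$ such that for all $\beta\in C$: $\beta\in A$ if and only if $\beta_2-\beta_1\le\Delta\big(\tfrac{\beta_1+\beta_2}{2}\big)$. *)

From Stdlib Require Import Reals.
Open Scope R_scope.

Definition inC (b : R * R) : Prop :=
  0 <= fst b <= 1 /\ 0 <= snd b <= 1 /\ fst b <= snd b.

(* A subset of R^2 is closed (standard topology of R^2): its complement is
   open, using square neighbourhoods (which generate the Euclidean topology). *)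
Definition closed2 (A : R * R -> Prop) : Prop :=
  forall p : R * R, ~ A p ->
    exists eps : R, 0 < eps /\
      forall q : R * R, Rabs (fst q - fst p) < eps -> Rabs (snd q - snd p) < eps -> ~ A q.

(* A closed interval [b1, b2] is coded by its centre x and its width d.  By
   monotonicity the widths of members of A centred at x form an initial segment
   of [0, 1]; Delta x is its supremum.  Closedness of A makes the supremum
   attained: a member of A of width just below Delta x, shrunk to any target
   width d <= Delta x, is arbitrarily close to the interval of width d. *)
From Stdlib Require Import Reals Lra Classical.
Open Scope R_scope.

Lemma lub_approx (E : R -> Prop) (m eps : R) :
  is_lub E m -> 0 < eps -> exists d, E d /\ m - eps < d.
Proof.
  intros [Hub Hleast] Heps.
  apply NNPP; intro Hnone.
  enough (m <= m - eps) by lra.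
  apply Hleast; intros d Hd.
  apply Rnot_lt_le; intro Hlt.
  apply Hnone; exists d; split; assumption.
Qed.

Definition seg (x d : R) : R * R := (x - d / 2, x + d / 2).

Lemma seg_midpoint (b : R * R) :
  seg ((fst b + snd b) / 2) (snd b - fst b) = b.
Proof.
  destruct b as [b1 b2]; unfold seg; simpl; f_equal; field.
Qed.

Section MaxWidth.

Variable A : R * R -> Prop.
Hypothesis A_sub_C : forall b, A b -> inC b.
Hypothesis A_closed : closed2 A.
Hypothesis A_diag : forall b : R, 0 <= b <= 1 -> A (b, b).
Hypothesis A_sub_interval :
  forall beta gamma : R * R, A beta -> inC gamma ->
    fst beta <= fst gamma -> fst gamma <= snd gamma -> snd gamma <= snd beta ->
    A gamma.

(* Width 0 is always admitted, so that the set is nonempty for every x. *)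
Definition width_set (x d : R) : Prop := d = 0 \/ (0 <= d /\ A (seg x d)).

Lemma width_set_le_1 (x d : R) : width_set x d -> d <= 1.
Proof.
  intros [-> | [_ HA]]; [lra |].
  destruct (A_sub_C _ HA) as [H1 [H2 _]]; unfold seg in *; simpl in *; lra.
Qed.

Lemma width_set_bound (x : R) : bound (width_set x).
Proof. exists 1; intros d; apply width_set_le_1. Qed.

Definition max_width (x : R) : R :=
  proj1_sig (completeness (width_set x) (width_set_bound x)
                          (ex_intro _ 0 (or_introl eq_refl))).

Lemma max_width_lub (x : R) : is_lub (width_set x) (max_width x).
Proof. exact (proj2_sig (completeness _ _ _)). Qed.

Lemma max_width_ge_0 (x : R) : 0 <= max_width x.
Proof. apply (proj1 (max_width_lub x)); left; reflexivity. Qed.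

Lemma max_width_le_1 (x : R) : max_width x <= 1.
Proof. apply (proj2 (max_width_lub x)); intro d; apply width_set_le_1. Qed.

Lemma width_set_le (x d d' : R) :
  width_set x d -> 0 <= d' <= d -> width_set x d'.
Proof.
  intros Hd Hd'.
  destruct (Req_dec d' 0) as [-> | Hnz]; [left; reflexivity |].
  destruct Hd as [-> | [_ HA]]; [lra |].
  right; split; [lra |].
  apply (A_sub_interval _ _ HA).
  - destruct (A_sub_C _ HA) as [H1 [H2 _]]; unfold inC, seg in *; simpl in *; lra.
  - unfold seg; simpl; lra.
  - unfold seg; simpl; lra.
  - unfold seg; simpl; lra.
Qed.

Lemma width_set_seg (x d : R) : 0 <= x <= 1 -> width_set x d -> A (seg x d).
Proof.
  intros Hx [-> | [_ HA]]; [| exact HA].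
  unfold seg; replace (x - 0 / 2) with x by field;
    replace (x + 0 / 2) with x by field.
  now apply A_diag.
Qed.

Lemma max_width_attained (x d : R) :
  0 <= x <= 1 -> 0 <= d <= max_width x -> A (seg x d).
Proof.
  intros Hx Hd.
  apply NNPP; intro HnA.
  destruct (A_closed _ HnA) as [eps [Heps Hfar]].
  destruct (lub_approx _ _ _ (max_width_lub x) Heps) as [d1 [Hd1 Hclose]].
  assert (Hd1_le : d1 <= max_width x) by (apply (max_width_lub x); exact Hd1).
  assert (Hd1_ge : 0 <= d1) by (destruct Hd1 as [-> | [? _]]; lra).
  set (d0 := Rmin d1 d).
  assert (Hd0 : 0 <= d0 <= d /\ d0 <= d1 /\ d - d0 < eps).
  { unfold d0; destruct (Rle_dec d1 d).
    - rewrite Rmin_left by lra; lra.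
    - rewrite Rmin_right by lra; lra. }
  apply (Hfar (seg x d0)).
  - unfold seg; simpl; apply Rabs_def1; lra.
  - unfold seg; simpl; apply Rabs_def1; lra.
  - apply width_set_seg; [exact Hx |].
    apply (width_set_le _ d1); [exact Hd1 | lra].
Qed.

End MaxWidth.

Theorem lemma1 (A : R * R -> Prop) :
  (forall b, A b -> inC b) ->
  closed2 A ->
  (forall b : R, 0 <= b <= 1 -> A (b, b)) ->
  (forall beta gamma : R * R, A beta -> inC gamma ->
     fst beta <= fst gamma -> fst gamma <= snd gamma -> snd gamma <= snd beta ->
     A gamma) ->
  exists Delta : R -> R,
    (forall x, 0 <= x <= 1 -> 0 <= Delta x <= 1) /\
    (forall beta : R * R, inC beta ->
       (A beta <-> snd beta - fst beta <= Delta ((fst beta + snd beta) / 2))).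
Proof.
  intros A_sub_C A_closed A_diag A_sub_interval.
  exists (max_width A A_sub_C); split.
  - intros x _; split; [apply max_width_ge_0 | apply max_width_le_1].
  - intros beta Hbeta.
    destruct Hbeta as [H1 [H2 H3]].
    rewrite <- (seg_midpoint beta) at 1.
    split; intro H.
    + apply (max_width_lub A A_sub_C).
      right; split; [lra | exact H].
    + apply (max_width_attained A A_sub_C A_closed A_diag A_sub_interval);
        lra.
Qed.
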